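(* Fix a round $t$ and a bid $b\in[0,1]$. Let $m_t$ have CDF $G$ and be independent of the outcomes $(v_{t,1},v_{t,0})\in[0,1]^2$, where $\mathbb{E}[v_{t,1}-v_{t,0}]=\theta_*^\top x_t$. Let $\widehat G_t$ be a function with $\widehat G_t(b)\in(0,1)$, fixed (i.e. not random, or independent of $(m_t,v_{t,1},v_{t,0})$), satisfying $|\widehat G_t(b)-G(b)|\le u_t(b)$. Define \[ \widetilde e_t(b)=\frac{\mathbb{1}[b\ge m_t]\,v_{t,1}}{\widehat G_t(b)}-\frac{\mathbb{1}[b<m_t]\,v_{t,0}}{1-\widehat G_t(b)},\qquad \sigma_t(b)=\frac{1}{\widehat G_t(b)\,(1-\widehat G_t(b))}. \] Then with $c_0=4$, \[ \left|\mathbb{E}[\widetilde e_t(b)]-\theta_*^\top x_t\right|\le c_0\,u_t(b)\,\sigma_t(b)\quad\text{and}\quad \mathrm{Var}(\widetilde e_t(b))\le c_0\,\sigma_t(b)^2. \]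
   Context: Context: second-price auction round with context $x_t\in\mathbb{R}^d$, bid $b$, highest other bid $m_t$ with CDF $G$ (win iff $b\ge m_t$), winning outcome $v_{t,1}$ and baseline outcome $v_{t,0}$; $\theta_*\in\mathbb{R}^d$ is the linear treatment-effect parameter. $\widetilde e_t(b)$ is an inverse-propensity-weighted estimator of the treatment effect $v_{t,1}-v_{t,0}$ using an estimated propensity $\widehat G_t(b)$. *)

From HB Require Import structures.
From mathcomp Require Import all_boot all_order all_algebra.
From mathcomp Require Import all_classical all_reals all_analysis.
Set Implicit Arguments. Unset Strict Implicit. Unset Printing Implicit Defensive.
Import Order.TTheory GRing.Theory Num.Theory.
Local Open Scope classical_set_scope.
Local Open Scope ring_scope.

Definition indep_rv_pair d (T : measurableType d) (R : realType)
  (P : probability T R) (m v1 v0 : T -> R) : Prop :=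
  forall (A : set R) (B : set (R * R)%type), measurable A -> measurable B ->
    P (m @^-1` A `&` (fun w => (v1 w, v0 w)) @^-1` B) =
    (P (m @^-1` A) * P ((fun w => (v1 w, v0 w)) @^-1` B))%E.

Definition ipw_est d (T : measurableType d) (R : realType)
  (gh b : R) (m v1 v0 : T -> R) : T -> R :=
  fun w => ((nat_of_bool (m w <= b)%R)%:R * v1 w) / gh
           - ((nat_of_bool (b < m w)%R)%:R * v0 w) / (1 - gh).

Definition sigma_t (R : realType) (gh : R) : R := (gh * (1 - gh))^-1.

(* By independence of m_t and the outcomes, E[1{m_t <= b} v_1] = G(b) E[v_1] and
   E[1{b < m_t} v_0] = (1 - G(b)) E[v_0].  Hence, with p = G(b) and g = Ĝ_t(b),
   E[ẽ] - θ^T x = (p - g) (E[v_1] / g + E[v_0] / (1 - g)), of modulus at most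
   u σ because σ = 1/g + 1/(1 - g).  Moreover ẽ takes values in the interval
   [-1/(1 - g), 1/g] of length σ, so Var ẽ <= σ^2.  Both bounds thus hold with
   c_0 = 1. *)

From HB Require Import structures.
From mathcomp Require Import all_boot all_order all_algebra.
From mathcomp Require Import all_classical all_reals all_analysis.
From mathcomp Require Import measurable_realfun ring lra.
Set Implicit Arguments.
Unset Strict Implicit.
Unset Printing Implicit Defensive.
Import Order.TTheory GRing.Theory Num.Theory.
Local Open Scope classical_set_scope.
Local Open Scope ring_scope.

Section bounded_random_variables.
Context d (T : measurableType d) (R : realType) (P : probability T R).
Local Open Scope ereal_scope.

Lemma Lfun1_itv (f : T -> R) (lo hi : R) : measurable_fun setT f ->
  (forall w, lo <= f w <= hi)%R -> f \in Lfun P 1.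
Proof.
move=> mf f_itv; apply/Lfun1_integrable/measurable_bounded_integrable => //.
  exact: (le_lt_trans (probability_le1 P measurableT) (ltry _)).
exists (`|lo| + `|hi|)%R; split; first exact: num_real.
move=> M /ltW leM w _; apply: le_trans leM; have /andP[lof fhi] := f_itv w.
rewrite ler_norml; have := ler_norm hi; have := ler_norm (- lo).
rewrite normrN; have := normr_ge0 lo; have := normr_ge0 hi; lra.
Qed.

Lemma expectation_itv (f : T -> R) (lo hi : R) : measurable_fun setT f ->
  (forall w, lo <= f w <= hi)%R -> exists2 a : R, 'E_P[f] = a%:E & (lo <= a <= hi)%R.
Proof.
move=> mf f_itv; have f1 := Lfun1_itv mf f_itv.
have cst1 r : cst r \in Lfun P 1.
  by apply: (Lfun1_itv (lo := r) (hi := r)) => // ?; rewrite lexx.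
have fin_f := expectation_fin_num f1.
exists (fine 'E_P[f]); first by rewrite fineK.
have cst_le r : (forall w, r <= f w)%R -> 'E_P[cst r] <= 'E_P[f].
  move=> rf; rewrite -sube_ge0 ?fin_f ?orbT// -(expectationB f1 (cst1 r)).
  by apply: expectation_ge0 => w /=; rewrite subr_ge0.
have le_cst r : (forall w, f w <= r)%R -> 'E_P[f] <= 'E_P[cst r].
  move=> fr; rewrite -sube_ge0 ?fin_f// -(expectationB (cst1 r) f1).
  by apply: expectation_ge0 => w /=; rewrite subr_ge0.
rewrite -!lee_fin fineK// -(expectation_cst P lo) -(expectation_cst P hi).
by rewrite cst_le ?le_cst// => w; case/andP: (f_itv w).
Qed.

Lemma variance_le_sqr_width (f : T -> R) (lo hi : R) : measurable_fun setT f ->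
  (forall w, lo <= f w <= hi)%R -> variance P f <= ((hi - lo) ^+ 2)%:E.
Proof.
move=> mf f_itv; have [a Ea /andP[loa ahi]] := expectation_itv mf f_itv.
rewrite /variance covariance.unlock Ea /= -(expectation_cst P ((hi - lo) ^+ 2)).
apply: expectation_le => //.
- by apply: measurable_funM; apply: measurable_funB.
- by move=> w /=; rewrite -expr2 sqr_ge0.
- by move=> w; rewrite sqr_ge0.
apply: aeW => w; have /andP[lof fhi] := f_itv w.
change ((f w - a) * (f w - a) <= (hi - lo) ^+ 2)%R; rewrite expr2.
have : (0 <= (hi - lo - (f w - a)) * (hi - lo + (f w - a)))%R.
  by apply: mulr_ge0; lra.
nra.
Qed.

(* Both sides are computed by the layer-cake formula E[X] = \int_0^oo P(X > r) dr. *)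
Lemma expectation_indicM_indep (D : set T) (f : T -> R) :
  measurable D -> measurable_fun setT f -> (forall w, 0 <= f w)%R ->
  (forall r, P (D `&` f @^-1` `]r, +oo[) = P D * P (f @^-1` `]r, +oo[)) ->
  'E_P[\1_D \* f] = P D * 'E_P[f].
Proof.
move=> mD mf f0 indep.
have mDf : measurable_fun setT (\1_D \* f)%R by apply: measurable_funM.
pose X : {RV P >-> R} := HB.pack f (isMeasurableFun.Build _ _ _ _ _ mf).
pose Y : {RV P >-> R} := HB.pack (\1_D \* f)%R (isMeasurableFun.Build _ _ _ _ _ mDf).
rewrite -[f]/(X : T -> R) -[(\1_D \* f)%R]/(Y : T -> R).
rewrite !ge0_expectation_ccdf//; last by move=> w /=; rewrite mulr_ge0.
rewrite -ge0_integralZl//; last exact: measurable_funTS (ccdf_measurable X).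
apply: eq_integral => r; rewrite inE /= in_itv /= andbT => r0.
rewrite /ccdf /= -indep; congr (P _); apply/seteqP; split => w /=.
  rewrite !in_itv /= !andbT indicE.
  have [/set_mem wD|_] := boolP (w \in D); first by rewrite mul1r.
  by rewrite mul0r => /(le_lt_trans r0); rewrite ltxx.
by rewrite !in_itv /= !andbT indicE => -[/mem_set -> fr]; rewrite mul1r.
Qed.

Lemma indep_rv_pair_fst (m v1 v0 : T -> R) : indep_rv_pair P m v1 v0 ->
  forall A B, measurable A -> measurable B ->
  P (m @^-1` A `&` v1 @^-1` B) = P (m @^-1` A) * P (v1 @^-1` B).
Proof.
move=> indep A B mA mB; have := indep A (B `*` setT) mA (measurableX mB measurableT).
by rewrite [_ @^-1` (B `*` setT)](_ : _ = v1 @^-1` B)//; apply/seteqP; split=> w //= [].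
Qed.

Lemma indep_rv_pair_snd (m v1 v0 : T -> R) : indep_rv_pair P m v1 v0 ->
  forall A B, measurable A -> measurable B ->
  P (m @^-1` A `&` v0 @^-1` B) = P (m @^-1` A) * P (v0 @^-1` B).
Proof.
move=> indep A B mA mB; have := indep A (setT `*` B) mA (measurableX measurableT mB).
by rewrite [_ @^-1` (setT `*` B)](_ : _ = v0 @^-1` B)//; apply/seteqP; split=> w //= [].
Qed.

End bounded_random_variables.

Section ipw_estimator.
Context d (T : measurableType d) (R : realType).
Variables (m v1 v0 : T -> R) (gh b : R).

Lemma ipw_estE : ipw_est gh b m v1 v0 =
  gh^-1 \o* (\1_(m @^-1` `]-oo, b]) \* v1) \-
  (1 - gh)^-1 \o* (\1_(m @^-1` `]b, +oo[) \* v0).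
Proof.
have memE (I : interval R) w : (w \in m @^-1` [set` I]) = (m w \in I).
  by apply/idP/idP => [/set_mem|/mem_set].
by apply/funext => w; rewrite /ipw_est /= !indicE !memE !in_itv /= andbT.
Qed.

Lemma ipw_est_itv : 0 < gh < 1 ->
  (forall w, 0 <= v1 w <= 1) -> (forall w, 0 <= v0 w <= 1) ->
  forall w, - (1 - gh)^-1 <= ipw_est gh b m v1 v0 w <= gh^-1.
Proof.
move=> /andP[gh0 gh1] v1_01 v0_01 w.
have ig0 : 0 < gh^-1 by rewrite invr_gt0.
have ih0 : 0 < (1 - gh)^-1 by rewrite invr_gt0 subr_gt0.
have /andP[? ?] := v1_01 w; have /andP[? ?] := v0_01 w.
by rewrite /ipw_est; case: (leP (m w) b) => _ /=;
  rewrite ?mul1r ?mul0r ?subr0 ?sub0r; apply/andP; split; nra.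
Qed.

Hypothesis mm : measurable_fun setT m.
Hypothesis mv1 : measurable_fun setT v1.
Hypothesis mv0 : measurable_fun setT v0.

Let measurable_m_preimage (I : interval R) : measurable (m @^-1` [set` I]).
Proof. by rewrite -[_ @^-1` _]setTI; exact: mm. Qed.

Lemma measurable_ipw_est : measurable_fun setT (ipw_est gh b m v1 v0).
Proof.
by rewrite ipw_estE; apply: measurable_funB; apply: measurable_funM => //;
  apply: measurable_funM => //; exact: measurable_indic.
Qed.

Lemma expectation_ipw_est (P : probability T R) (p a c : R) :
  indep_rv_pair P m v1 v0 ->
  (forall w, 0 <= v1 w <= 1) -> (forall w, 0 <= v0 w <= 1) ->
  P (m @^-1` `]-oo, b]) = p%:E -> ('E_P[v1] = a%:E)%E -> ('E_P[v0] = c%:E)%E ->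
  ('E_P[ipw_est gh b m v1 v0] = (p * a / gh - (1 - p) * c / (1 - gh))%:E)%E.
Proof.
move=> indep v1_01 v0_01 PD1 Ea Ec.
have PD0 : P (m @^-1` `]b, +oo[) = (1 - p)%:E.
  by rewrite -setCitvl -preimage_setC probability_setC// PD1.
have mD1 : measurable (m @^-1` `]-oo, b]) := measurable_m_preimage _.
have mD0 : measurable (m @^-1` `]b, +oo[) := measurable_m_preimage _.
have indicM_Lfun1 D (v : T -> R) : measurable D -> measurable_fun setT v ->
    (forall w, 0 <= v w <= 1) -> \1_D \* v \in Lfun P 1.
  move=> mD mv v_01; apply: (Lfun1_itv P (lo := 0) (hi := 1)).
    by apply: measurable_funM => //; exact: measurable_indic.
  move=> w; have /andP[? ?] := v_01 w.
  change (0 <= \1_D w * v w <= 1); rewrite indicE.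
  by case: (w \in D); rewrite ?mul1r ?mul0r ?lexx ?ler01.
have v1_ge0 w : 0 <= v1 w by case/andP: (v1_01 w).
have v0_ge0 w : 0 <= v0 w by case/andP: (v0_01 w).
have E1 : ('E_P[\1_(m @^-1` `]-oo, b]) \* v1] = p%:E * a%:E)%E.
  rewrite expectation_indicM_indep// -?PD1 -?Ea// => r.
  by apply: (indep_rv_pair_fst indep); exact: measurable_itv.
have E0 : ('E_P[\1_(m @^-1` `]b, +oo[) \* v0] = (1 - p)%:E * c%:E)%E.
  rewrite expectation_indicM_indep// -?PD0 -?Ec// => r.
  by apply: (indep_rv_pair_snd indep); exact: measurable_itv.
rewrite ipw_estE expectationB ?Lfun_scale ?indicM_Lfun1//.
rewrite !expectationZl ?indicM_Lfun1// E1 E0 -!EFinM -EFinB.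
by congr (_%:E); ring.
Qed.

End ipw_estimator.

Lemma ipw_bias_eq (F : fieldType) (p a c g : F) : g != 0 -> 1 - g != 0 ->
  p * a / g - (1 - p) * c / (1 - g) - (a - c) = (p - g) * (a / g + c / (1 - g)).
Proof. by move=> g0 g1; field; rewrite g0 g1. Qed.

Lemma sigma_tE (R : realType) (g : R) : g != 0 -> 1 - g != 0 ->
  sigma_t g = g^-1 + (1 - g)^-1.
Proof. by move=> g0 g1; rewrite /sigma_t; field; rewrite g0 g1. Qed.

Lemma ipw_bias_le (R : realType) (p a c g u : R) : 0 < g < 1 ->
  0 <= a <= 1 -> 0 <= c <= 1 -> `|p - g| <= u ->
  `|p * a / g - (1 - p) * c / (1 - g) - (a - c)| <= u * sigma_t g.
Proof.
move=> /andP[g0 g1] /andP[a0 a1] /andP[c0 c1] pg_u.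
have g_neq0 : g != 0 by rewrite gt_eqF.
have g1_neq0 : 1 - g != 0 by rewrite subr_eq0 eq_sym lt_eqF.
have ig0 : 0 < g^-1 by rewrite invr_gt0.
have ih0 : 0 < (1 - g)^-1 by rewrite invr_gt0 subr_gt0.
rewrite ipw_bias_eq// sigma_tE// normrM ler_pM//.
by rewrite ger0_norm; nra.
Qed.

Theorem lemma2 (d : measure_display) (T : measurableType d) (R : realType)
  (P : probability T R) (n : nat) (theta x : 'cV[R]_n)
  (G : R -> R) (m v1 v0 : T -> R) (gh u b : R) :
  0 <= b <= 1 ->
  measurable_fun setT m -> measurable_fun setT v1 -> measurable_fun setT v0 ->
  (forall r : R, (G r)%:E = P [set w | m w <= r]) ->
  indep_rv_pair P m v1 v0 ->
  (forall w, 0 <= v1 w <= 1) -> (forall w, 0 <= v0 w <= 1) ->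
  ('E_P[fun w => (v1 w - v0 w)%R] = ((theta^T *m x) 0 0)%:E)%E ->
  0 < gh < 1 ->
  `|gh - G b| <= u ->
  (`| 'E_P[ipw_est gh b m v1 v0] - ((theta^T *m x) 0 0)%:E |
      <= (4 * u * sigma_t gh)%:E)%E /\
  (variance P (ipw_est gh b m v1 v0) <= (4 * sigma_t gh ^+ 2)%:E)%E.
Proof.
move=> _ mm mv1 mv0 PG indep v1_01 v0_01 Eth gh01 gh_u.
have [a Ea a01] := expectation_itv P mv1 v1_01.
have [c Ec c01] := expectation_itv P mv0 v0_01.
have -> : (theta^T *m x) 0 0 = a - c.
  apply: EFin_inj; rewrite -Eth EFinB -Ea -Ec expectationB//.
  - exact: Lfun1_itv mv1 v1_01.
  - exact: Lfun1_itv mv0 v0_01.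
have PD1 : P (m @^-1` `]-oo, b]) = (G b)%:E.
  by rewrite PG; congr (P _); apply/seteqP; split => w /=; rewrite in_itv.
have /andP[gh0 gh1] := gh01.
have sigma_ge0 : 0 <= sigma_t gh by rewrite /sigma_t invr_ge0 mulr_ge0 ?subr_ge0 ?ltW.
split.
- rewrite (expectation_ipw_est gh mm mv1 mv0 indep v1_01 v0_01 PD1 Ea Ec).
  rewrite -EFinB abse_EFin lee_fin.
  have u_ge0 : 0 <= u := le_trans (normr_ge0 _) gh_u.
  have Gb_u : `|G b - gh| <= u by rewrite distrC.
  apply: le_trans (ipw_bias_le gh01 a01 c01 Gb_u) _.
  by rewrite -mulrA ler_peMl// ?mulr_ge0// ler1n.
- apply: le_trans (variance_le_sqr_width P (measurable_ipw_est gh b mm mv1 mv0)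
    (ipw_est_itv m b gh01 v1_01 v0_01)) _.
  rewrite lee_fin opprK -sigma_tE ?gt_eqF ?subr_gt0//.
  by rewrite ler_peMl// ?sqr_ge0// ler1n.
Qed.
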